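(* Let $a,b\in\mathbb{Z}_{<0}$. Expand $q^{\frac12b}E_{(a,b)}X_1-E_{(a+1,b)}$ as a $\mathbb{Z}[q^{\pm\frac12}]$-linear combination of standard monomials. Then every standard monomial $E_{(c,d)}$ occurring with nonzero coefficient satisfies $c\le a-b+1$ if $d\ge0$, and $c-d\le a-b+1$ if $d<0$.
   Context: Let $\mathcal{T}$ be the quantum torus over $\mathbb{Z}[q^{\pm\frac12}]$ generated by $X_1^{\pm1},X_2^{\pm1}$ with $X_1X_2=qX_2X_1$, with skew field of fractions $\mathcal{F}$. Define $X_k\in\mathcal{F}$ ($k\in\mathbb{Z}$) by $X_{k-1}X_{k+1}=q^{\frac12}X_k+1$ for $k$ odd and $X_{k-1}X_{k+1}=q^2X_k^4+1$ for $k$ even; $\mathcal{A}_q(1,4)$ is the $\mathbb{Z}[q^{\pm\frac12}]$-subalgebra of $\mathcal{F}$ generated by all $X_k$. For $x\in\mathbb{Z}$, $[x]_+=\max(x,0)$. Standard monomials: $E_{(a,b)}=q^{-\frac12ab}X_3^{[-a]_+}X_1^{[a]_+}X_2^{[b]_+}X_0^{[-b]_+}$ for $(a,b)\in\mathbb{Z}^2$; they form a $\mathbb{Z}[q^{\pm\frac12}]$-basis of $\mathcal{A}_q(1,4)$. *)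

From Stdlib Require Import ZArith List.
Import ListNotations.
Open Scope Z_scope.

(* Write t := q^{1/2}.  T is the free Z-module with basis t^n X1^a X2^b
   (n, a, b : Z), with t central and X1 X2 = q X2 X1 = t^2 X2 X1.
   An element of T is represented by a finite formal sum: a list of terms
   (k, n, a, b) standing for k * t^n * X1^a * X2^b.  Two lists represent the
   same element iff they have the same coefficient function [coef]. *)
Definition term := (Z * Z * Z * Z)%type.
Definition qt := list term.

Definition coef (s : list term) (n a b : Z) : Z :=
  fold_right (fun x acc =>
    let '(k, n', a', b') := x in
    if (Z.eqb n n' && Z.eqb a a' && Z.eqb b b')%bool then k + acc else acc) 0 s.

Definition qt_eq (s1 s2 : qt) : Prop :=
  forall n a b : Z, coef s1 n a b = coef s2 n a b.

(* (t^n X1^a X2^b)(t^n' X1^a' X2^b') = t^(n+n'-2ba') X1^(a+a') X2^(b+b'),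
   since X2^b X1^a' = q^(-b a') X1^a' X2^b. *)
Definition term_mul (x y : term) : term :=
  let '(k, n, a, b) := x in
  let '(k', n', a', b') := y in
  (k * k', n + n' - 2 * b * a', a + a', b + b').

Definition qt_mul (s1 s2 : qt) : qt := flat_map (fun x => map (term_mul x) s2) s1.
Definition qt_add (s1 s2 : qt) : qt := s1 ++ s2.
Definition qt_scale (k n : Z) (s : qt) : qt := map (term_mul (k, n, 0, 0)) s.
Definition qt_one : qt := [(1, 0, 0, 0)].
Fixpoint qt_pow (s : qt) (m : nat) : qt :=
  match m with O => qt_one | S m' => qt_mul s (qt_pow s m') end.

Definition X1 : qt := [(1, 0, 1, 0)].
Definition X2 : qt := [(1, 0, 0, 1)].
Definition X1inv : qt := [(1, 0, -1, 0)].
Definition X2inv : qt := [(1, 0, 0, -1)].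

(* From X_0 X_2 = q^{1/2} X_1 + 1 (k = 1 odd):  X_0 = (q^{1/2} X_1 + 1) X_2^{-1} *)
Definition X0 : qt := qt_mul (qt_add [(1, 1, 1, 0)] qt_one) X2inv.
(* From X_1 X_3 = q^2 X_2^4 + 1 (k = 2 even):  X_3 = X_1^{-1} (q^2 X_2^4 + 1) *)
Definition X3 : qt := qt_mul X1inv (qt_add [(1, 4, 0, 4)] qt_one).

Definition posp (x : Z) : nat := Z.to_nat (Z.max x 0).

Definition E (a b : Z) : qt :=
  qt_scale 1 (- (a * b))
    (qt_mul (qt_mul (qt_mul (qt_pow X3 (posp (- a))) (qt_pow X1 (posp a)))
                    (qt_pow X2 (posp b)))
            (qt_pow X0 (posp (- b)))).

(* A Z[q^{±1/2}]-linear combination of standard monomials, given as a list of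
   entries (k, n, c, d) meaning k * t^n * E_(c,d).  The coefficient of E_(c,d)
   is the Laurent polynomial sum_n (coef l n c d) t^n. *)
Definition expand (l : list term) : qt :=
  flat_map (fun x => let '(k, n, c, d) := x in qt_scale k n (E c d)) l.

Definition occurs (l : list term) (c d : Z) : Prop :=
  exists n : Z, coef l n c d <> 0.

Definition target (a b : Z) : qt :=
  qt_add (qt_scale 1 b (qt_mul (E a b) X1)) (qt_scale (-1) 0 (E (a + 1) b)).

(* Order the monomials X1^x X2^y of the quantum torus lexicographically (by x, then by
   -y).  Each E_(c,d) is a power of q^(1/2) times X1^(c+[-d]+) X2^d plus lower terms, and
   (c,d) is recovered from this leading monomial.  Hence, among the E_(c,d) occurring in
   a combination, a greatest one contributes the leading monomial of the combination
   with a nonzero coefficient, which nothing else can cancel.  All monomials of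
   q^(b/2) E_(a,b) X1 - E_(a+1,b) are at most X1^(a-b+1) X2^b when b < 0, so every
   occurring E_(c,d) has c + [-d]+ <= a - b + 1. *)

From Stdlib Require Import ZArith List Lia.
Import ListNotations.
Open Scope bool_scope.
Open Scope Z_scope.

Lemma coef_cons k n' a' b' s n a b :
  coef ((k, n', a', b') :: s) n a b =
  (if (n =? n') && (a =? a') && (b =? b') then k else 0) + coef s n a b.
Proof. simpl. destruct (_ && _ && _); lia. Qed.

Lemma coef_app s1 s2 n a b : coef (s1 ++ s2) n a b = coef s1 n a b + coef s2 n a b.
Proof.
  induction s1 as [|[[[k n'] a'] b'] s IH]; [reflexivity|].
  cbn [app]. rewrite !coef_cons, IH. lia.
Qed.

Lemma coef_neq0_In s n a b : coef s n a b <> 0 -> exists k, In (k, n, a, b) s.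
Proof.
  induction s as [|[[[k n'] a'] b'] s IH]; [contradiction|].
  rewrite coef_cons. intro Hnz.
  destruct (Z.eqb_spec n n'), (Z.eqb_spec a a'), (Z.eqb_spec b b'); simpl in Hnz;
    try (subst; exists k; left; reflexivity);
    destruct IH as [k0 Hk0]; try lia; exists k0; right; exact Hk0.
Qed.

Lemma coef_map_term_mul k0 n0 a0 b0 s n a b :
  coef (map (term_mul (k0, n0, a0, b0)) s) n a b
  = k0 * coef s (n - n0 + 2 * b0 * (a - a0)) (a - a0) (b - b0).
Proof.
  induction s as [|[[[k n'] a'] b'] s IH]; [simpl; lia|].
  cbn [map term_mul]. rewrite !coef_cons, IH.
  destruct (Z.eqb_spec n (n0 + n' - 2 * b0 * a')), (Z.eqb_spec a (a0 + a')),
    (Z.eqb_spec b (b0 + b')), (Z.eqb_spec (n - n0 + 2 * b0 * (a - a0)) n'),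
    (Z.eqb_spec (a - a0) a'), (Z.eqb_spec (b - b0) b'); simpl; try lia; subst; nia.
Qed.

Lemma coef_scale k0 n0 s n a b : coef (qt_scale k0 n0 s) n a b = k0 * coef s (n - n0) a b.
Proof.
  unfold qt_scale. rewrite coef_map_term_mul, !Z.sub_0_r, Z.mul_0_r, Z.mul_0_l, Z.add_0_r.
  reflexivity.
Qed.

Definition wsum (s : qt) (h : Z -> Z -> Z -> Z) : Z :=
  fold_right (fun e acc => let '(k, n, a, b) := e in k * h n a b + acc) 0 s.

Lemma wsum_point s n0 a0 b0 v :
  wsum s (fun n a b => if (n0 =? n) && (a0 =? a) && (b0 =? b) then v else 0)
  = coef s n0 a0 b0 * v.
Proof.
  induction s as [|[[[k n] a] b] s IH]; [reflexivity|].
  rewrite coef_cons. simpl. rewrite IH. destruct (_ && _ && _); lia.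
Qed.

Lemma wsum_split_at s h n0 a0 b0 :
  wsum s h
  = wsum s (fun n a b => if (n0 =? n) && (a0 =? a) && (b0 =? b) then 0 else h n a b)
    + coef s n0 a0 b0 * h n0 a0 b0.
Proof.
  induction s as [|[[[k n] a] b] s IH]; [reflexivity|].
  rewrite coef_cons. simpl. rewrite IH.
  destruct (Z.eqb_spec n0 n), (Z.eqb_spec a0 a), (Z.eqb_spec b0 b); simpl; subst; lia.
Qed.

Lemma wsum_eq_on_support s h1 h2 :
  (forall n a b, coef s n a b <> 0 -> h1 n a b = h2 n a b) -> wsum s h1 = wsum s h2.
Proof.
  revert h1 h2.
  induction s as [|[[[k n0] a0] b0] s IH]; intros h1 h2 Hsupp; [reflexivity|].
  cbn [wsum fold_right]. fold (wsum s h1) (wsum s h2).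
  (* Split off every entry sharing the key of the head, whose total weight is
     the coefficient of the whole list at that key. *)
  rewrite (wsum_split_at s h1 n0 a0 b0), (wsum_split_at s h2 n0 a0 b0).
  rewrite (IH _ (fun n a b => if (n0 =? n) && (a0 =? a) && (b0 =? b) then 0 else h2 n a b)).
  - assert (Hhead := Hsupp n0 a0 b0). rewrite coef_cons, !Z.eqb_refl in Hhead.
    destruct (Z.eq_dec (k + coef s n0 a0 b0) 0) as [Hz|Hnz].
    + assert (Hs : coef s n0 a0 b0 = - k) by lia. rewrite Hs. ring.
    + simpl in Hhead. rewrite (Hhead Hnz). ring.
  - intros n a b Hnz. specialize (Hsupp n a b). rewrite coef_cons in Hsupp.
    destruct (Z.eqb_spec n0 n), (Z.eqb_spec a0 a), (Z.eqb_spec b0 b); simpl;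
      [subst; reflexivity|..]; apply Hsupp;
      destruct (Z.eqb_spec n n0), (Z.eqb_spec a a0), (Z.eqb_spec b b0); simpl; lia.
Qed.

Lemma coef_mul s1 s2 n a b :
  coef (qt_mul s1 s2) n a b
  = wsum s1 (fun n1 a1 b1 => coef s2 (n - n1 + 2 * b1 * (a - a1)) (a - a1) (b - b1)).
Proof.
  induction s1 as [|[[[k n1] a1] b1] s1 IH]; [reflexivity|].
  unfold qt_mul in *. cbn [flat_map]. rewrite coef_app, IH, coef_map_term_mul. reflexivity.
Qed.

Lemma coef_expand l n a b :
  coef (expand l) n a b = wsum l (fun m c d => coef (E c d) (n - m) a b).
Proof.
  induction l as [|[[[k m] c] d] l IH]; [reflexivity|].
  unfold expand in *. cbn [flat_map]. rewrite coef_app, IH, coef_scale. reflexivity.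
Qed.

(* The X2-degree is compared in reverse, so that X0 = (q^(1/2) X1 + 1) X2^-1 and
   X3 = X1^-1 (q^2 X2^4 + 1) have the leading monomials X1 X2^-1 and X1^-1. *)
Definition mono_le (x y X Y : Z) : Prop := x < X \/ (x = X /\ Y <= y).

Definition supp_le (s : qt) (X Y : Z) : Prop :=
  forall k n x y, In (k, n, x, y) s -> mono_le x y X Y.

Lemma supp_le_coef s X Y n x y : supp_le s X Y -> coef s n x y <> 0 -> mono_le x y X Y.
Proof. intros Hs Hnz. destruct (coef_neq0_In _ _ _ _ Hnz) as [k Hk]. exact (Hs _ _ _ _ Hk). Qed.

Lemma supp_le_coef0 s X Y n x y : supp_le s X Y -> ~ mono_le x y X Y -> coef s n x y = 0.
Proof.
  intros Hs Hgt. destruct (Z.eq_dec (coef s n x y) 0) as [|Hnz]; [assumption|].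
  contradiction (Hgt (supp_le_coef _ _ _ _ _ _ Hs Hnz)).
Qed.

Lemma supp_le_add s1 s2 X Y : supp_le s1 X Y -> supp_le s2 X Y -> supp_le (qt_add s1 s2) X Y.
Proof. intros H1 H2 k n x y Hin. apply in_app_or in Hin as [Hin|Hin]; eauto. Qed.

Lemma supp_le_mul s1 s2 X Y X' Y' :
  supp_le s1 X Y -> supp_le s2 X' Y' -> supp_le (qt_mul s1 s2) (X + X') (Y + Y').
Proof.
  intros H1 H2 k n x y Hin. apply in_flat_map in Hin as [[[[k1 n1] a1] b1] [Hin1 Hin]].
  apply in_map_iff in Hin as [[[[k2 n2] a2] b2] [Heq Hin2]]. injection Heq as <- <- <- <-.
  specialize (H1 _ _ _ _ Hin1). specialize (H2 _ _ _ _ Hin2). unfold mono_le in *. lia.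
Qed.

Lemma supp_le_scale k0 n0 s X Y : supp_le s X Y -> supp_le (qt_scale k0 n0 s) X Y.
Proof.
  intros Hs k n x y Hin. apply in_map_iff in Hin as [[[[k1 n1] a1] b1] [Heq Hin]].
  injection Heq as <- <- <- <-. specialize (Hs _ _ _ _ Hin). unfold mono_le in *. lia.
Qed.

Definition monic_lead (s : qt) (X Y m : Z) : Prop :=
  supp_le s X Y /\ forall n, coef s n X Y = if n =? m then 1 else 0.

Definition has_monic_lead (s : qt) (X Y : Z) : Prop := exists m, monic_lead s X Y m.

Lemma monic_lead_mul s1 s2 X Y X' Y' m1 m2 :
  monic_lead s1 X Y m1 -> monic_lead s2 X' Y' m2 ->
  monic_lead (qt_mul s1 s2) (X + X') (Y + Y') (m1 + m2 - 2 * Y * X').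
Proof.
  intros [B1 C1] [B2 C2]. split; [apply supp_le_mul; assumption|]. intro n.
  rewrite coef_mul.
  rewrite (wsum_eq_on_support _ _
             (fun n1 a1 b1 => if (n + 2 * Y * X' - m2 =? n1) && (X =? a1) && (Y =? b1)
                              then 1 else 0)).
  - rewrite wsum_point, C1, Z.mul_1_r.
    destruct (Z.eqb_spec (n + 2 * Y * X' - m2) m1), (Z.eqb_spec n (m1 + m2 - 2 * Y * X')); lia.
  - intros n1 a1 b1 Hnz. apply (supp_le_coef _ _ _ _ _ _ B1) in Hnz.
    destruct (Z.eqb_spec (n + 2 * Y * X' - m2) n1), (Z.eqb_spec X a1), (Z.eqb_spec Y b1);
      cbn [andb]; try (apply (supp_le_coef0 _ _ _ _ _ _ B2); unfold mono_le in *; lia).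
    all: subst a1 b1; rewrite !Z.add_simpl_l, C2.
    all: destruct (Z.eqb_spec (n - n1 + 2 * Y * X') m2); lia.
Qed.

Lemma has_monic_lead_mul s1 s2 X Y X' Y' :
  has_monic_lead s1 X Y -> has_monic_lead s2 X' Y' ->
  has_monic_lead (qt_mul s1 s2) (X + X') (Y + Y').
Proof. intros [m1 H1] [m2 H2]. eexists. exact (monic_lead_mul _ _ _ _ _ _ _ _ H1 H2). Qed.

Ltac solve_monic_lead :=
  split;
  [ intros ? ? ? ? Hin; repeat destruct Hin as [Hin|Hin]; try contradiction;
    injection Hin as <- <- <- <-; unfold mono_le; lia
  | intro; cbn; repeat destruct (_ =? _); reflexivity ].

Lemma monic_lead_one : monic_lead qt_one 0 0 0.
Proof. solve_monic_lead. Qed.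

Lemma monic_lead_X1 : monic_lead X1 1 0 0.
Proof. solve_monic_lead. Qed.

Lemma monic_lead_X2 : monic_lead X2 0 1 0.
Proof. solve_monic_lead. Qed.

Lemma monic_lead_X0 : monic_lead X0 1 (-1) 1.
Proof. change X0 with [(1, 1, 1, -1); (1, 0, 0, -1)]. solve_monic_lead. Qed.

Lemma monic_lead_X3 : monic_lead X3 (-1) 0 0.
Proof. change X3 with [(1, 4, -1, 4); (1, 0, -1, 0)]. solve_monic_lead. Qed.

Lemma has_monic_lead_pow s X Y k :
  has_monic_lead s X Y -> has_monic_lead (qt_pow s k) (Z.of_nat k * X) (Z.of_nat k * Y).
Proof.
  intro Hs. induction k as [|k IH]; [exists 0; exact monic_lead_one|].
  rewrite Nat2Z.inj_succ, !Z.mul_succ_l, (Z.add_comm _ X), (Z.add_comm _ Y).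
  exact (has_monic_lead_mul _ _ _ _ _ _ Hs IH).
Qed.

Lemma has_monic_lead_scale n0 s X Y :
  has_monic_lead s X Y -> has_monic_lead (qt_scale 1 n0 s) X Y.
Proof.
  intros [m [Hs Hc]]. exists (m + n0). split; [apply supp_le_scale; assumption|].
  intro n. rewrite coef_scale, Hc, Z.mul_1_l.
  destruct (Z.eqb_spec (n - n0) m), (Z.eqb_spec n (m + n0)); lia.
Qed.

(* X3, X1, X2 and X0 lead with X1^-1, X1, X2 and X1 X2^-1 respectively. *)
Definition Edeg (c d : Z) : Z := c + Z.max (- d) 0.

Lemma has_monic_lead_E c d : has_monic_lead (E c d) (Edeg c d) d.
Proof.
  assert (HE : has_monic_lead (E c d)
    (Z.of_nat (posp (- c)) * -1 + Z.of_nat (posp c) * 1 + Z.of_nat (posp d) * 0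
       + Z.of_nat (posp (- d)) * 1)
    (Z.of_nat (posp (- c)) * 0 + Z.of_nat (posp c) * 0 + Z.of_nat (posp d) * 1
       + Z.of_nat (posp (- d)) * -1)).
  { apply has_monic_lead_scale.
    repeat apply has_monic_lead_mul; apply has_monic_lead_pow; eexists;
      [apply monic_lead_X3 | apply monic_lead_X1 | apply monic_lead_X2 | apply monic_lead_X0]. }
  unfold posp in HE. rewrite !Z2Nat.id in HE by lia.
  match type of HE with has_monic_lead _ ?x ?y =>
    replace x with (Edeg c d) in HE by (unfold Edeg; lia); replace y with d in HE by lia
  end.
  exact HE.
Qed.

Lemma supp_le_E c d : supp_le (E c d) (Edeg c d) d.
Proof. destruct (has_monic_lead_E c d) as [m [Hs _]]. exact Hs. Qed.

Lemma supp_le_target a b : b < 0 -> supp_le (target a b) (a - b + 1) b.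
Proof.
  intro hb. unfold target. apply supp_le_add; apply supp_le_scale.
  - assert (HEX1 := supp_le_mul _ _ _ _ _ _ (supp_le_E a b) (proj1 monic_lead_X1)).
    rewrite Z.add_0_r in HEX1.
    replace (a - b + 1) with (Edeg a b + 1) by (unfold Edeg; lia). exact HEX1.
  - replace (a - b + 1) with (Edeg (a + 1) b) by (unfold Edeg; lia). apply supp_le_E.
Qed.

Lemma exists_greatest {A : Type} (R : A -> A -> Prop) :
  (forall x y, R x y \/ R y x) -> (forall x y z, R x y -> R y z -> R x z) ->
  forall L : list A, L <> [] -> exists m, In m L /\ forall y, In y L -> R y m.
Proof.
  intros Rtotal Rtrans L. induction L as [|h L IH]; intros HL; [contradiction|].
  assert (Rrefl : forall x, R x x) by (intro x; destruct (Rtotal x x); assumption).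
  destruct L as [|h' L].
  - exists h. split; [left; reflexivity|]. intros y [<-|[]]. apply Rrefl.
  - destruct IH as [m [Hm Hmax]]; [discriminate|].
    destruct (Rtotal h m) as [Hhm|Hmh].
    + exists m. split; [right; exact Hm|]. intros y [<-|Hy]; auto.
    + exists h. split; [left; reflexivity|]. intros y [<-|Hy]; eauto.
Qed.

Lemma exists_top_entry l n c d : coef l n c d <> 0 ->
  exists ns cs ds, coef l ns cs ds <> 0 /\
    forall n' c' d', coef l n' c' d' <> 0 -> mono_le (Edeg c' d') d' (Edeg cs ds) ds.
Proof.
  intro Hnz.
  set (L := filter (fun '(_, n, c, d) => negb (coef l n c d =? 0)) l).
  assert (HL : forall k n c d, In (k, n, c, d) L <-> In (k, n, c, d) l /\ coef l n c d <> 0).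
  { intros. unfold L. rewrite filter_In, Bool.negb_true_iff, Z.eqb_neq. reflexivity. }
  destruct (exists_greatest
    (fun e e' : term => let '(_, _, c, d) := e in let '(_, _, c', d') := e' in
                        mono_le (Edeg c d) d (Edeg c' d') d')) with (L := L)
    as [[[[ks ns] cs] ds] [Hin Hmax]].
  - intros [[[? ?] c1] d1] [[[? ?] c2] d2]. unfold mono_le. lia.
  - intros [[[? ?] c1] d1] [[[? ?] c2] d2] [[[? ?] c3] d3]. unfold mono_le. lia.
  - destruct (coef_neq0_In _ _ _ _ Hnz) as [k Hk].
    assert (HkL : In (k, n, c, d) L) by (apply HL; auto).
    destruct L; [contradiction | discriminate].
  - exists ns, cs, ds. split; [apply HL in Hin; apply Hin|].
    intros n' c' d' Hnz'. destruct (coef_neq0_In _ _ _ _ Hnz') as [k' Hk'].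
    exact (Hmax (k', n', c', d') (proj2 (HL _ _ _ _) (conj Hk' Hnz'))).
Qed.

(* Distinct (c,d) give distinct leading monomials, so at the leading monomial of the
   top entry only the E_(cs,ds) contribute, each with a single power of t. *)
Lemma coef_expand_top l ns cs ds ms :
  monic_lead (E cs ds) (Edeg cs ds) ds ms ->
  (forall n c d, coef l n c d <> 0 -> mono_le (Edeg c d) d (Edeg cs ds) ds) ->
  coef (expand l) (ns + ms) (Edeg cs ds) ds = coef l ns cs ds.
Proof.
  intros [_ Hlead] Htop. rewrite coef_expand, <- (Z.mul_1_r (coef l ns cs ds)), <- wsum_point.
  apply wsum_eq_on_support. intros n c d Hnz.
  destruct (Z.eqb_spec cs c), (Z.eqb_spec ds d);
    rewrite ?Bool.andb_true_r, ?Bool.andb_false_r, ?Bool.andb_false_l.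
  1: { subst c d. rewrite Hlead. destruct (Z.eqb_spec (ns + ms - n) ms), (Z.eqb_spec ns n); lia. }
  all: apply (supp_le_coef0 _ _ _ _ _ _ (supp_le_E c d)).
  all: specialize (Htop n c d Hnz); unfold mono_le, Edeg in *; lia.
Qed.

Theorem lemma4p4 (a b : Z) (ha : a < 0) (hb : b < 0) (l : list term) :
  qt_eq (expand l) (target a b) ->
  forall c d : Z, occurs l c d ->
    (0 <= d -> c <= a - b + 1) /\ (d < 0 -> c - d <= a - b + 1).
Proof.
  intros Heq c d [n Hn].
  destruct (exists_top_entry l n c d Hn) as (ns & cs & ds & Hs & Htop).
  destruct (has_monic_lead_E cs ds) as [ms Hms].
  assert (Hcoef := coef_expand_top l ns cs ds ms Hms Htop).
  rewrite Heq in Hcoef.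
  assert (Hbound : mono_le (Edeg cs ds) ds (a - b + 1) b).
  { apply (supp_le_coef _ _ _ (ns + ms) _ _ (supp_le_target a b hb)). congruence. }
  specialize (Htop n c d Hn). unfold mono_le, Edeg in *. lia.
Qed.
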